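(* Let $G$ be a finite simple undirected graph without isolated vertices and let $v_0 \in V(G)$. Then $$\tau(G) \le \sum_{v \in N[v_0]} TDV_G(v) \le \tau(G)\cdot \gamma_t(G),$$ and both bounds are sharp (i.e., each is attained with equality for some such graph $G$ and vertex $v_0$).
   Context: A set $D \subseteq V(G)$ is a total dominating set (TDS) of $G$ if every vertex $v\in V(G)$ has a neighbor in $D$. The total domination number $\gamma_t(G)$ is the minimum cardinality of a TDS; a TDS of cardinality $\gamma_t(G)$ is a $\gamma_t(G)$-set. $\tau(G)$ denotes the number of $\gamma_t(G)$-sets, and for $v\in V(G)$, the total domination value $TDV_G(v)$ is the number of $\gamma_t(G)$-sets containing $v$. $N[v_0]=N(v_0)\cup\{v_0\}$ is the closed neighborhood of $v_0$. *)

From mathcomp Require Import all_boot.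
Set Implicit Arguments. Unset Strict Implicit. Unset Printing Implicit Defensive.

Definition simple_graph (T : finType) (e : rel T) : Prop :=
  symmetric e /\ irreflexive e.

Definition no_isolated (T : finType) (e : rel T) : Prop :=
  forall v : T, exists u : T, e v u.

Definition nbhd (T : finType) (e : rel T) (v : T) : {set T} := [set u | e v u].
Definition cnbhd (T : finType) (e : rel T) (v : T) : {set T} := v |: nbhd e v.

Definition is_tds (T : finType) (e : rel T) (D : {set T}) : bool :=
  [forall v : T, exists u in D, e v u].

(* total domination number (well defined when a TDS exists, e.g. no isolated
   vertices; the default #|T| is then never below the true minimum) *)
Definition gamma_t (T : finType) (e : rel T) : nat :=
  \big[minn/#|T|]_(D : {set T} | is_tds e D) #|D|.

Definition gamma_t_sets (T : finType) (e : rel T) : {set {set T}} :=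
  [set D : {set T} | is_tds e D && (#|D| == gamma_t e)].

Definition tau (T : finType) (e : rel T) : nat := #|gamma_t_sets e|.

Definition TDV (T : finType) (e : rel T) (v : T) : nat :=
  #|[set D in gamma_t_sets e | v \in D]|.

Definition sumTDV (T : finType) (e : rel T) (v0 : T) : nat :=
  \sum_(v in cnbhd e v0) TDV e v.

(* Double counting: sumTDV e v0 counts pairs (D, v) with D a gamma_t-set and
   v in D :&: N[v0], so it is the sum over the gamma_t-sets D of
   #|D :&: N[v0]|.  Each term is at least 1, because v0 has a neighbour in the
   total dominating set D, and at most #|D| = gamma_t.  Both bounds are
   attained by graphs with a unique gamma_t-set M, where the sum collapses to
   #|M :&: N[v0]|: the path P4 at an end vertex (M = {1, 2}, one element in
   N[0]) and K2 (M is the whole vertex set). *)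

From mathcomp Require Import all_boot order.

Set Implicit Arguments.
Unset Strict Implicit.
Unset Printing Implicit Defensive.

Section TotalDominationValues.

Variables (T : finType) (e : rel T).

Lemma gamma_t_leq_tds (D : {set T}) : is_tds e D -> gamma_t e <= #|D|.
Proof.
move=> tdsD; have := Order.TotalTheory.bigmin_le_cond #|T| (fun A : {set T} => #|A|) tdsD.
by rewrite minEnat.
Qed.

Lemma gamma_t_setsP (D : {set T}) :
  reflect (is_tds e D /\ #|D| = gamma_t e) (D \in gamma_t_sets e).
Proof. by rewrite inE; apply: (iffP andP) => -[tdsD /eqP]. Qed.

Lemma sumTDV_double_count (v0 : T) :
  sumTDV e v0 = \sum_(D in gamma_t_sets e) #|D :&: cnbhd e v0|.
Proof.
rewrite /sumTDV /TDV.
under eq_bigr => v _ do rewrite -sum1_card.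
under [RHS]eq_bigr => D _ do rewrite -sum1_card.
rewrite (exchange_big_dep (mem (gamma_t_sets e))) /=; last by move=> v D _; rewrite inE => /andP[].
apply: eq_bigr => D gD; apply: eq_bigl => v.
by move: gD; rewrite !inE => ->; rewrite andbC.
Qed.

Lemma tds_meets_cnbhd (D : {set T}) (v0 : T) :
  is_tds e D -> 0 < #|D :&: cnbhd e v0|.
Proof.
move=> /forallP /(_ v0) /existsP [u /andP [uD e_v0u]].
by apply/card_gt0P; exists u; rewrite !inE uD e_v0u orbT.
Qed.

Lemma sumTDV_bounds (v0 : T) : tau e <= sumTDV e v0 <= tau e * gamma_t e.
Proof.
rewrite sumTDV_double_count /tau -sum1_card big_distrl /=.
apply/andP; split; apply: leq_sum => D /gamma_t_setsP [tdsD cardD].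
- exact: tds_meets_cnbhd.
- by rewrite mul1n -cardD subset_leq_card ?subsetIl.
Qed.

Lemma gamma_t_sets_least (M : {set T}) :
  is_tds e M -> (forall D, is_tds e D -> M \subset D) ->
  gamma_t_sets e = [set M] /\ gamma_t e = #|M|.
Proof.
move=> tdsM leastM.
have gammaM : gamma_t e = #|M|.
  apply/eqP; rewrite eqn_leq gamma_t_leq_tds //=.
  rewrite /gamma_t; elim/big_ind: _ => [|x y|D /leastM /subset_leq_card //].
  - exact: max_card.
  - by rewrite leq_min => -> ->.
split=> //; apply/setP => D; rewrite in_set1.
apply/gamma_t_setsP/eqP => [[tdsD cardD]|-> //].
by apply/esym/eqP; rewrite eqEcard leastM //= cardD gammaM.
Qed.

Lemma sumTDV_unique_gamma_t_set (M : {set T}) (v0 : T) :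
  gamma_t_sets e = [set M] -> sumTDV e v0 = #|M :&: cnbhd e v0| /\ tau e = 1.
Proof.
by move=> onlyM; rewrite sumTDV_double_count /tau onlyM big_set1 cards1.
Qed.

End TotalDominationValues.

Definition path4 : rel 'I_4 := fun x y => (x.+1 == y :> nat) || (y.+1 == x :> nat).

Lemma path4_simple : simple_graph path4.
Proof.
split=> [x y|x]; first by rewrite /path4 orbC.
by rewrite /path4 orbb (gtn_eqF (ltnSn x)).
Qed.

Lemma path4_no_isolated : no_isolated path4.
Proof.
move=> -[[|[|[|[|//]]]] lt_x4].
- by exists (inord 1); rewrite /path4 inordK.
- by exists (inord 2); rewrite /path4 inordK.
- by exists (inord 3); rewrite /path4 inordK.
- by exists (inord 2); rewrite /path4 inordK.
Qed.

Definition path4_core : {set 'I_4} := [set inord 1; inord 2].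

Lemma path4_core_tds : is_tds path4 path4_core.
Proof.
apply/forallP => -[[|[|[|[|//]]]] lt_x4]; apply/existsP.
- by exists (inord 1); rewrite !inE eqxx /path4 inordK.
- by exists (inord 2); rewrite !inE eqxx orbT /path4 inordK.
- by exists (inord 1); rewrite !inE eqxx /path4 inordK.
- by exists (inord 2); rewrite !inE eqxx orbT /path4 inordK.
Qed.

(* The leaves 0 and 3 have the unique neighbours 1 and 2. *)
Lemma path4_core_least (D : {set 'I_4}) : is_tds path4 D -> path4_core \subset D.
Proof.
move=> /forallP tdsD; rewrite subUset !sub1set.
have [u /andP [uD e0u]] := existsP (tdsD ord0).
have [w /andP [wD e3w]] := existsP (tdsD ord_max).
have -> : inord 1 = u by apply: val_inj; rewrite /= inordK //; case: u e0u {uD} => [[|[|]]].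
have -> : inord 2 = w; last by rewrite uD wD.
by apply: val_inj; rewrite /= inordK //; case: w e3w {wD} => [[|[|[|[|]]]]].
Qed.

Lemma path4_sumTDV_min : sumTDV path4 ord0 = tau path4.
Proof.
have [onlyM _] := gamma_t_sets_least path4_core_tds path4_core_least.
have [-> ->] := sumTDV_unique_gamma_t_set ord0 onlyM.
have -> : path4_core :&: cnbhd path4 ord0 = [set inord 1].
  by apply/setP => -[[|[|[|[|//]]]] lt_x4]; rewrite !inE /path4 -!val_eqE /= !inordK.
by rewrite cards1.
Qed.

Definition K2 : rel bool := fun x y => x != y.

Lemma K2_simple : simple_graph K2.
Proof. by split=> [x y|x]; rewrite /K2 1?eq_sym ?eqxx. Qed.

Lemma K2_no_isolated : no_isolated K2.
Proof. by move=> x; exists (~~ x); case: x. Qed.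

Lemma K2_sumTDV_max : sumTDV K2 true = tau K2 * gamma_t K2.
Proof.
have tdsT : is_tds K2 setT.
  by apply/forallP => x; apply/existsP; exists (~~ x); rewrite in_setT; case: x.
have leastT D : is_tds K2 D -> setT \subset D.
  move=> /forallP tdsD; apply/subsetP => x _.
  have /existsP [u /andP [uD x'u]] := tdsD (~~ x).
  by case: x u uD x'u => -[].
have [onlyT ->] := gamma_t_sets_least tdsT leastT.
have [-> ->] := sumTDV_unique_gamma_t_set true onlyT.
by rewrite setTI mul1n; apply: eq_card => -[]; rewrite !inE.
Qed.

Theorem proposition2p4 :
  (forall (T : finType) (e : rel T) (v0 : T),
      simple_graph e -> no_isolated e ->
      tau e <= sumTDV e v0 <= tau e * gamma_t e)
  /\ (exists (T : finType) (e : rel T) (v0 : T),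
      simple_graph e /\ no_isolated e /\ sumTDV e v0 = tau e)
  /\ (exists (T : finType) (e : rel T) (v0 : T),
      simple_graph e /\ no_isolated e /\ sumTDV e v0 = tau e * gamma_t e).
Proof.
split; [|split].
- by move=> T e v0 _ _; apply: sumTDV_bounds.
- exists ('I_4 : finType), path4, ord0.
  by split; [exact: path4_simple | split; [exact: path4_no_isolated | exact: path4_sumTDV_min]].
- exists (bool : finType), K2, true.
  by split; [exact: K2_simple | split; [exact: K2_no_isolated | exact: K2_sumTDV_max]].
Qed.
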